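(* Let $f:\mathbb{N}_0^n\to[0,\infty)$ be subadditive and suppose there is a constant $D_0$ with $f(\boldsymbol k)-f(\boldsymbol k+\boldsymbol e_i)\le D_0$ for all $\boldsymbol k\in\mathbb{N}_0^n$, $i=1,\dots,n$. Extend $f$ to $\mathbb{R}_0^n$ by $f(\boldsymbol r)=f(\lceil\boldsymbol r\rceil)$ and let $\hat f(\boldsymbol r)=\lim_{t\to\infty}f(t\boldsymbol r)/t$. Then $\hat f$ is subadditive and convex on $\mathbb{R}_0^n$, and Lipschitz: $|\hat f(\boldsymbol r)-\hat f(\boldsymbol s)|\le D\sum_{i=1}^n|r_i-s_i|$ with $D=\max\{f(\boldsymbol e_1),\dots,f(\boldsymbol e_n),D_0\}$. Moreover, for every sequence $\boldsymbol r_t\in\mathbb{R}_0^n$ converging to a finite $\boldsymbol\lambda$, $\lim_{t\to\infty}f(t\boldsymbol r_t)/t=\hat f(\boldsymbol\lambda)$.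
   Context: $\boldsymbol e_i$ is the $i$-th unit vector. A function $f:\mathbb{N}_0^n\to[0,\infty)$ is subadditive if $f(\boldsymbol k+\boldsymbol m)\le f(\boldsymbol k)+f(\boldsymbol m)$. The limit $\hat f(\boldsymbol r)$ exists and is finite and positively homogeneous for any nonnegative subadditive $f$ (so it is well defined here). Ceilings are coordinatewise. *)

From Stdlib Require Import Reals Lra Lia ZArith.
From Stdlib Require Vectors.Fin.
Open Scope R_scope.

Definition NVec (n : nat) := Fin.t n -> nat.
Definition RVec (n : nat) := Fin.t n -> R.

Definition unitv {n : nat} (i : Fin.t n) : NVec n :=
  fun j => if Fin.eq_dec i j then 1%nat else 0%nat.

Definition nadd {n : nat} (k m : NVec n) : NVec n := fun i => (k i + m i)%nat.
Definition radd {n : nat} (r s : RVec n) : RVec n := fun i => r i + s i.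
Definition rscale {n : nat} (a : R) (r : RVec n) : RVec n := fun i => a * r i.

Definition nonnegv {n : nat} (r : RVec n) : Prop := forall i, 0 <= r i.

Definition subadditive {n : nat} (f : NVec n -> R) : Prop :=
  forall k m, f (nadd k m) <= f k + f m.

(* ceiling of a real: ceil x = - floor (-x), truncated to nat (used on x >= 0) *)
Definition ceilN (x : R) : nat := Z.to_nat (- Int_part (- x)).

Definition fext {n : nat} (f : NVec n -> R) (r : RVec n) : R :=
  f (fun i => ceilN (r i)).

Definition lim_infty (g : R -> R) (l : R) : Prop :=
  forall eps, 0 < eps -> exists T, forall t, T <= t -> Rabs (g t - l) < eps.

Fixpoint sumFin (n : nat) : (Fin.t n -> R) -> R :=
  match n with
  | O => fun _ => 0
  | S m => fun g => g Fin.F1 + sumFin m (fun i => g (Fin.FS i))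
  end.

Fixpoint maxFin (n : nat) : (Fin.t n -> R) -> R -> R :=
  match n with
  | O => fun _ d => d
  | S m => fun g d => Rmax (g Fin.F1) (maxFin m (fun i => g (Fin.FS i)) d)
  end.

Definition vcv {n : nat} (r : nat -> RVec n) (l : RVec n) : Prop :=
  forall i, Un_cv (fun t => r t i) (l i).

(* For f : N_0^n -> [0,oo) subadditive with f(k) - f(k + e_i) <= D0, set
   D = max {f(e_1), ..., f(e_n), D0}.  The proof rests on one estimate:
   - a step along a unit vector changes f by at most D (upwards by
     subadditivity, downwards by D0), so |f k - f m| <= D sum_i |k_i - m_i|;
     the ceiling extension then satisfies |f(X) - f(Y)| <= D sum_i (|X_i - Y_i| + 1)
     and f(X + Y) <= f(X) + f(Y) + 2 D n on R_0^n.
   Hence t |-> f(t r) is subadditive up to a constant and locally bounded, and a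
   real-variable Fekete lemma gives the limit fhat r of f(t r) / t.  Everything
   else is obtained by comparing growth rates (lemma [lim_linear_bound]):
   subadditivity and the Lipschitz bound pass to the limit because the errors are
   O(1) and D t sum_i |r_i - s_i| + O(1); homogeneity follows from rescaling
   t, convexity from subadditivity plus homogeneity, and the limit along
   t r_t from the Lipschitz bound, which makes |f(t r_t) - f(t lam)| / t small. *)

From Stdlib Require Import Reals Lra Lia ZArith Classical FunctionalExtensionality ClassicalEpsilon.
From Stdlib Require Vectors.Fin.
Open Scope R_scope.

Lemma sumFin_ext n : forall g h : Fin.t n -> R,
  (forall i, g i = h i) -> sumFin n g = sumFin n h.
Proof.
  induction n as [|n IH]; intros g h E; simpl; [reflexivity|].
  rewrite E, (IH _ (fun i => h (Fin.FS i))); [reflexivity|intros; apply E].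
Qed.

Lemma sumFin_plus n : forall g h : Fin.t n -> R,
  sumFin n (fun i => g i + h i) = sumFin n g + sumFin n h.
Proof.
  induction n as [|n IH]; intros g h; simpl; [lra|].
  rewrite (IH (fun i => g (Fin.FS i)) (fun i => h (Fin.FS i))). lra.
Qed.

Lemma sumFin_scal n : forall c (g : Fin.t n -> R),
  sumFin n (fun i => c * g i) = c * sumFin n g.
Proof.
  induction n as [|n IH]; intros c g; simpl; [lra|].
  rewrite (IH c (fun i => g (Fin.FS i))). lra.
Qed.

Lemma sumFin_const n c : sumFin n (fun _ => c) = INR n * c.
Proof. induction n as [|n IH]; simpl sumFin; [simpl; lra|]. rewrite IH, S_INR. lra. Qed.

Lemma sumFin_le n : forall g h : Fin.t n -> R,
  (forall i, g i <= h i) -> sumFin n g <= sumFin n h.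
Proof.
  induction n as [|n IH]; intros g h H; simpl; [lra|].
  pose proof (IH (fun i => g (Fin.FS i)) (fun i => h (Fin.FS i)) (fun i => H _)).
  pose proof (H Fin.F1). lra.
Qed.

Lemma sumFin_nat n : forall a : NVec n, exists K, sumFin n (fun i => INR (a i)) = INR K.
Proof.
  induction n as [|n IH]; intros a; simpl; [exists 0%nat; reflexivity|].
  destruct (IH (fun i => a (Fin.FS i))) as [K HK].
  exists (a Fin.F1 + K)%nat. rewrite HK, plus_INR. reflexivity.
Qed.

Lemma sumFin_nat_pos n : forall a : NVec n,
  0 < sumFin n (fun i => INR (a i)) -> exists i, (0 < a i)%nat.
Proof.
  induction n as [|n IH]; intros a H; simpl in H; [lra|].
  destruct (a Fin.F1) eqn:E.
  - destruct (IH (fun i => a (Fin.FS i))) as [i Hi]; [simpl in H; lra|].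
    exists (Fin.FS i). exact Hi.
  - exists Fin.F1. lia.
Qed.

Lemma sumFin_nat_zero n : forall a : NVec n,
  sumFin n (fun i => INR (a i)) = 0 -> forall i, a i = 0%nat.
Proof.
  induction n as [|n IH]; intros a H i; [inversion i|]. simpl in H.
  pose proof (sumFin_le n (fun _ => 0) (fun j => INR (a (Fin.FS j))) (fun j => pos_INR _)) as Hpos.
  rewrite sumFin_const, Rmult_0_r in Hpos. pose proof (pos_INR (a Fin.F1)).
  apply (Fin.caseS' i).
  - apply INR_eq. simpl. lra.
  - intros p. apply (IH (fun j => a (Fin.FS j))). lra.
Qed.

Lemma sumFin_unit n : forall i : Fin.t n, sumFin n (fun j => INR (unitv i j)) = 1.
Proof.
  induction n as [|n IH]; intros i; [inversion i|].
  apply (Fin.caseS' i); cbn [sumFin].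
  - assert (Z : sumFin n (fun j => INR (unitv Fin.F1 (Fin.FS j))) = 0).
    { rewrite (sumFin_ext n _ (fun _ => 0)), sumFin_const; [lra|].
      intros j. unfold unitv. destruct (Fin.eq_dec Fin.F1 (Fin.FS j)); [discriminate|reflexivity]. }
    rewrite Z. unfold unitv. destruct (Fin.eq_dec Fin.F1 Fin.F1); [simpl; lra|congruence].
  - intros p.
    assert (S : sumFin n (fun j => INR (unitv (Fin.FS p) (Fin.FS j))) = 1).
    { rewrite <- (IH p). apply sumFin_ext. intros j. unfold unitv.
      destruct (Fin.eq_dec (Fin.FS p) (Fin.FS j)) as [E|E], (Fin.eq_dec p j) as [E'|E'];
        try reflexivity.
      - apply Fin.FS_inj in E. contradiction.
      - subst. contradiction. }
    rewrite S. unfold unitv. destruct (Fin.eq_dec (Fin.FS p) Fin.F1); [discriminate|simpl; lra].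
Qed.

Lemma nvec_remove_unit n (a : NVec n) K :
  sumFin n (fun i => INR (a i)) = INR (S K) ->
  exists i (a' : NVec n), (forall j, a j = (a' j + unitv i j)%nat) /\
                          sumFin n (fun j => INR (a' j)) = INR K.
Proof.
  intros Ha. pose proof (pos_INR K). rewrite S_INR in Ha.
  destruct (sumFin_nat_pos n a) as [i Hi]; [lra|].
  set (a' := fun j => if Fin.eq_dec i j then (a j - 1)%nat else a j).
  assert (Ea : forall j, a j = (a' j + unitv i j)%nat).
  { intros j. unfold a', unitv. destruct (Fin.eq_dec i j); [subst; lia|lia]. }
  exists i, a'. split; [exact Ea|].
  rewrite (sumFin_ext n _ (fun j => INR (a' j) + INR (unitv i j))) in Ha
    by (intros j; rewrite (Ea j) at 1; apply plus_INR).
  rewrite sumFin_plus, sumFin_unit in Ha. lra.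
Qed.

Lemma sumFin_cv0 n : forall u : nat -> Fin.t n -> R,
  (forall i, Un_cv (fun t => u t i) 0) -> Un_cv (fun t => sumFin n (u t)) 0.
Proof.
  induction n as [|n IH]; intros u H; simpl.
  - intros eps He. exists 0%nat. intros. unfold R_dist. rewrite Rminus_0_r, Rabs_R0. lra.
  - replace 0 with (0 + 0) by lra. apply CV_plus; [apply H|].
    apply (IH (fun t i => u t (Fin.FS i))). intros; apply H.
Qed.

Lemma maxFin_ge_g n : forall g d (i : Fin.t n), g i <= maxFin n g d.
Proof.
  induction n as [|n IH]; intros g d i; [inversion i|].
  simpl. apply (Fin.caseS' i); [apply Rmax_l|].
  intros p. eapply Rle_trans; [apply (IH (fun i => g (Fin.FS i)))|apply Rmax_r].
Qed.

Lemma maxFin_ge_d n : forall g d, d <= maxFin n g d.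
Proof.
  induction n as [|n IH]; intros g d; simpl; [lra|].
  eapply Rle_trans; [apply IH|apply Rmax_r].
Qed.

(* A maximum of nonnegative values (n >= 1) is nonnegative, while for n = 0 all sums vanish:
   either way multiplying sums by it is monotone. *)
Lemma maxFin_mul_sum_mono n (g : Fin.t n -> R) d (u v : Fin.t n -> R) :
  (forall i, 0 <= g i) -> (forall i, u i <= v i) ->
  maxFin n g d * sumFin n u <= maxFin n g d * sumFin n v.
Proof.
  intros Hg Huv. destruct n as [|n].
  - simpl. lra.
  - apply Rmult_le_compat_l; [|apply sumFin_le; exact Huv].
    eapply Rle_trans; [apply (Hg Fin.F1)|apply maxFin_ge_g].
Qed.

Lemma lim_ext g h L : (forall t, g t = h t) -> lim_infty g L -> lim_infty h L.
Proof. intros E H eps He. destruct (H eps He) as [T HT]. exists T. intros t Ht. rewrite <- E. auto. Qed.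

Lemma lim_const c : lim_infty (fun _ => c) c.
Proof. intros eps He. exists 0. intros. rewrite Rminus_diag, Rabs_R0. lra. Qed.

Lemma lim_plus g h L M :
  lim_infty g L -> lim_infty h M -> lim_infty (fun t => g t + h t) (L + M).
Proof.
  intros Hg Hh eps He.
  destruct (Hg (eps / 2)) as [T1 HT1]; [lra|]. destruct (Hh (eps / 2)) as [T2 HT2]; [lra|].
  exists (Rmax T1 T2). intros t Ht.
  specialize (HT1 t (Rle_trans _ _ _ (Rmax_l _ _) Ht)).
  specialize (HT2 t (Rle_trans _ _ _ (Rmax_r _ _) Ht)).
  replace (g t + h t - (L + M)) with ((g t - L) + (h t - M)) by ring.
  eapply Rle_lt_trans; [apply Rabs_triang|]. lra.
Qed.

Lemma lim_scale a g L : lim_infty g L -> lim_infty (fun t => a * g t) (a * L).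
Proof.
  intros H eps He.
  assert (Ha : 0 < Rabs a + 1) by (pose proof (Rabs_pos a); lra).
  destruct (H (eps / (Rabs a + 1))) as [T HT]; [apply Rdiv_lt_0_compat; lra|].
  exists T. intros t Ht. specialize (HT t Ht).
  rewrite <- Rmult_minus_distr_l, Rabs_mult.
  apply Rmult_lt_compat_l with (r := Rabs a + 1) in HT; [|lra].
  replace ((Rabs a + 1) * (eps / (Rabs a + 1))) with eps in HT by (field; lra).
  pose proof (Rabs_pos (g t - L)). nra.
Qed.

Lemma lim_inv : lim_infty (fun t => / t) 0.
Proof.
  intros eps He. exists (/ eps + 1). intros t Ht.
  assert (Hi : 0 < / eps) by (apply Rinv_0_lt_compat; lra).
  rewrite Rminus_0_r, Rabs_pos_eq by (left; apply Rinv_0_lt_compat; lra).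
  rewrite <- (Rinv_inv eps). apply Rinv_lt_contravar; nra.
Qed.

Lemma lim_le g1 g2 L1 L2 T0 : lim_infty g1 L1 -> lim_infty g2 L2 ->
  (forall t, T0 <= t -> g1 t <= g2 t) -> L1 <= L2.
Proof.
  intros H1 H2 H. apply Rnot_lt_le. intros Hlt.
  assert (He : 0 < (L1 - L2) / 2) by lra.
  destruct (H1 _ He) as [T1 HT1]. destruct (H2 _ He) as [T2 HT2].
  set (t := Rmax T0 (Rmax T1 T2)).
  specialize (H t (Rmax_l _ _)).
  specialize (HT1 t (Rle_trans _ _ _ (Rmax_l _ _) (Rmax_r _ _))).
  specialize (HT2 t (Rle_trans _ _ _ (Rmax_r _ _) (Rmax_r _ _))).
  apply Rabs_def2 in HT1. apply Rabs_def2 in HT2. lra.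
Qed.

Lemma lim_unique g L1 L2 : lim_infty g L1 -> lim_infty g L2 -> L1 = L2.
Proof.
  intros H1 H2. apply Rle_antisym; [apply (lim_le g g _ _ 0 H1 H2)|apply (lim_le g g _ _ 0 H2 H1)];
    intros; apply Rle_refl.
Qed.

Lemma lim_linear_bound (F G : R -> R) L1 L2 a c T0 :
  lim_infty (fun t => F t / t) L1 -> lim_infty (fun t => G t / t) L2 ->
  (forall t, T0 <= t -> F t <= G t + a * t + c) -> L1 <= L2 + a.
Proof.
  intros HF HG H.
  apply (lim_le _ (fun t => G t / t + a + c * / t) _ _ (Rmax T0 1) HF).
  - replace (L2 + a) with (L2 + a + c * 0) by ring.
    apply lim_plus; [apply lim_plus; [exact HG|apply lim_const]|apply lim_scale, lim_inv].
  - intros t Ht. pose proof (Rmax_l T0 1). pose proof (Rmax_r T0 1).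
    specialize (H t ltac:(lra)).
    replace (G t / t + a + c * / t) with ((G t + a * t + c) / t) by (field; lra).
    unfold Rdiv. apply Rmult_le_compat_r; [left; apply Rinv_0_lt_compat; lra|exact H].
Qed.

Lemma lim_comp_scale a g L : 0 < a -> lim_infty g L -> lim_infty (fun t => g (a * t)) L.
Proof.
  intros Ha H eps He. destruct (H eps He) as [T HT]. exists (T / a).
  intros t Ht. apply HT. apply Rmult_le_compat_l with (r := a) in Ht; [|lra].
  replace (a * (T / a)) with T in Ht by (field; lra). exact Ht.
Qed.

Lemma nat_above x : exists N, x <= INR N.
Proof.
  destruct (archimed x) as [H1 _]. exists (Z.to_nat (up x)).
  destruct (Z.le_gt_cases 0 (up x)) as [H|H].
  - rewrite INR_IZR_INZ, Z2Nat.id by exact H. lra.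
  - apply IZR_lt in H. pose proof (pos_INR (Z.to_nat (up x))). lra.
Qed.

Lemma lim_infty_seq g L : lim_infty g L -> Un_cv (fun N => g (INR N)) L.
Proof.
  intros H eps He. destruct (H eps He) as [T HT]. destruct (nat_above T) as [N0 HN0].
  exists N0. intros N HN. apply HT. apply le_INR in HN. lra.
Qed.

Lemma Un_cv_close (u v w : nat -> R) L N0 : Un_cv u L -> Un_cv w 0 ->
  (forall N, (N0 <= N)%nat -> Rabs (v N - u N) <= w N) -> Un_cv v L.
Proof.
  intros Hu Hw H eps He.
  destruct (Hu (eps / 2)) as [N1 HN1]; [lra|]. destruct (Hw (eps / 2)) as [N2 HN2]; [lra|].
  exists (Nat.max N0 (Nat.max N1 N2)). intros N HN. unfold R_dist in *.
  specialize (H N ltac:(lia)). specialize (HN1 N ltac:(lia)). specialize (HN2 N ltac:(lia)).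
  rewrite Rminus_0_r in HN2. pose proof (Rle_abs (w N)).
  replace (v N - L) with ((v N - u N) + (u N - L)) by ring.
  eapply Rle_lt_trans; [apply Rabs_triang|]. lra.
Qed.

Lemma Un_cv_const c : Un_cv (fun _ => c) c.
Proof. intros eps He. exists 0%nat. intros. unfold R_dist. rewrite Rminus_diag, Rabs_R0. exact He. Qed.

Lemma euclid_R t s : 0 <= t -> 0 < s -> exists q u, 0 <= u <= s /\ t = INR q * s + u.
Proof.
  intros Ht Hs. destruct (archimed (t / s)) as [H1 H2]. set (z := up (t / s)) in *.
  assert (Hts : 0 <= t / s) by (apply Rle_mult_inv_pos; lra).
  assert (Hz : (1 <= z)%Z) by (apply (Zlt_le_succ 0); apply lt_IZR; lra).
  exists (Z.to_nat (z - 1)), (t - IZR (z - 1) * s).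
  rewrite INR_IZR_INZ, Z2Nat.id by lia. split; [|ring].
  rewrite minus_IZR. simpl.
  assert (E : t = (t / s) * s) by (field; lra).
  split; nra.
Qed.

Section Fekete.

Variable psi : R -> R.
Hypothesis psi_nonneg : forall t, 0 <= t -> 0 <= psi t.
Hypothesis psi_sub : forall s t, 0 <= s -> 0 <= t -> psi (s + t) <= psi s + psi t.
Hypothesis psi_bounded : forall s, 0 <= s -> exists M, forall u, 0 <= u <= s -> psi u <= M.

Lemma ratio_infimum : exists L, (forall s, 0 < s -> L <= psi s / s) /\
  (forall e, 0 < e -> exists s, 0 < s /\ psi s / s < L + e).
Proof.
  set (E := fun x => exists s, 0 < s /\ x = - (psi s / s)).
  assert (ratio_nonneg : forall s, 0 < s -> 0 <= psi s / s).
  { intros s Hs. apply Rle_mult_inv_pos; [apply psi_nonneg|]; lra. }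
  destruct (completeness E) as [m [Hub Hlub]].
  - exists 0. intros x [s [Hs ->]]. pose proof (ratio_nonneg s Hs). lra.
  - exists (- (psi 1 / 1)), 1. split; [lra|reflexivity].
  - exists (- m). split.
    + intros s Hs. assert (E (- (psi s / s))) as Hx by (exists s; split; [exact Hs|reflexivity]).
      specialize (Hub _ Hx). lra.
    + intros e He. apply NNPP. intros Hn.
      enough (m <= m - e) by lra. apply Hlub. intros x [s [Hs ->]].
      apply Rnot_lt_le. intros Hlt. apply Hn. exists s. split; [exact Hs|lra].
Qed.

Lemma psi_multiple s q u : 0 <= s -> 0 <= u -> psi (INR q * s + u) <= INR q * psi s + psi u.
Proof.
  intros Hs Hu. induction q as [|q IH].
  - simpl. rewrite Rmult_0_l, !Rplus_0_l. lra.
  - rewrite S_INR. replace ((INR q + 1) * s + u) with (s + (INR q * s + u)) by ring.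
    pose proof (pos_INR q).
    pose proof (psi_sub s (INR q * s + u) Hs ltac:(nra)). lra.
Qed.

Lemma fekete : exists L, lim_infty (fun t => psi t / t) L.
Proof.
  destruct ratio_infimum as [L [L_lower L_approx]].
  exists L. intros eps He.
  destruct (L_approx (eps / 2)) as [s [Hs Hps]]; [lra|].
  destruct (psi_bounded s) as [M HM]; [lra|].
  (* for t = q s + u, psi t <= (t / s) psi s + M *)
  exists (1 + 2 * Rabs M / eps). intros t Ht.
  assert (HM2 : 0 <= 2 * Rabs M / eps) by (apply Rle_mult_inv_pos; [pose proof (Rabs_pos M)|]; lra).
  assert (HMt : 2 * Rabs M <= eps * t).
  { replace (2 * Rabs M) with (eps * (2 * Rabs M / eps)) by (field; lra). nra. }
  pose proof (Rle_abs M).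
  assert (lower : L * t <= psi t).
  { pose proof (L_lower t ltac:(lra)) as Hl.
    replace (psi t) with (psi t / t * t) by (field; lra). nra. }
  assert (upper : psi t <= psi s / s * t + M).
  { destruct (euclid_R t s ltac:(lra) Hs) as [q [u [Hu Et]]].
    pose proof (psi_multiple s q u ltac:(lra) (proj1 Hu)) as Hq. rewrite <- Et in Hq.
    pose proof (HM u Hu). pose proof (pos_INR q). pose proof (psi_nonneg s ltac:(lra)).
    assert (INR q * psi s <= psi s / s * t).
    { replace (INR q * psi s) with (psi s / s * (INR q * s)) by (field; lra).
      apply Rmult_le_compat_l; [apply Rle_mult_inv_pos|]; lra. }
    lra. }
  replace (psi t / t - L) with ((psi t - L * t) / t) by (field; lra).
  rewrite Rabs_pos_eq by (apply Rle_mult_inv_pos; lra).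
  apply Rmult_lt_reg_r with t; [lra|].
  replace ((psi t - L * t) / t * t) with (psi t - L * t) by (field; lra).
  assert (psi s / s * t <= (L + eps / 2) * t) by (apply Rmult_le_compat_r; lra).
  nra.
Qed.

End Fekete.

Lemma fekete_approx (phi : R -> R) C : 0 <= C ->
  (forall t, 0 <= t -> 0 <= phi t) ->
  (forall s t, 0 <= s -> 0 <= t -> phi (s + t) <= phi s + phi t + C) ->
  (forall s, 0 <= s -> exists M, forall u, 0 <= u <= s -> phi u <= M) ->
  exists L, lim_infty (fun t => phi t / t) L.
Proof.
  intros HC Hpos Hsub Hbd.
  destruct (fekete (fun t => phi t + C)) as [L HL].
  - intros t Ht. pose proof (Hpos t Ht). lra.
  - intros s t Hs Ht. pose proof (Hsub s t Hs Ht). lra.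
  - intros s Hs. destruct (Hbd s Hs) as [M HM]. exists (M + C). intros u Hu. pose proof (HM u Hu). lra.
  - exists (L + - C * 0).
    apply (lim_ext (fun t => (phi t + C) / t + - C * / t)); [intros t; unfold Rdiv; ring|].
    apply lim_plus; [exact HL|apply lim_scale, lim_inv].
Qed.

Lemma ceilN_bounds x : 0 <= x -> x <= INR (ceilN x) < x + 1.
Proof.
  intros Hx. unfold ceilN, Int_part.
  destruct (archimed (- x)) as [H1 H2].
  set (z := up (- x)) in *.
  assert (E : IZR (- (z - 1)) = 1 - IZR z) by (rewrite opp_IZR, minus_IZR; simpl; ring).
  assert (Hz : (0 <= - (z - 1))%Z) by (apply le_IZR; rewrite E; simpl; lra).
  rewrite INR_IZR_INZ, Z2Nat.id by exact Hz. rewrite E. lra.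
Qed.

Lemma ceilN_0 : ceilN 0 = 0%nat.
Proof.
  destruct (ceilN_bounds 0 (Rle_refl 0)) as [_ H].
  destruct (ceilN 0) as [|k]; [reflexivity|]. rewrite S_INR in H. pose proof (pos_INR k). lra.
Qed.

Lemma rscale_plus_l {n} s t (r : RVec n) : rscale (s + t) r = radd (rscale s r) (rscale t r).
Proof. apply functional_extensionality. intros i. unfold rscale, radd. ring. Qed.

Lemma rscale_radd {n} t (r s : RVec n) : rscale t (radd r s) = radd (rscale t r) (rscale t s).
Proof. apply functional_extensionality. intros i. unfold rscale, radd. ring. Qed.

Lemma rscale_rscale {n} t a (r : RVec n) : rscale t (rscale a r) = rscale (t * a) r.
Proof. apply functional_extensionality. intros i. unfold rscale. ring. Qed.

Lemma nonnegv_rscale {n} a (r : RVec n) : 0 <= a -> nonnegv r -> nonnegv (rscale a r).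
Proof. intros Ha Hr i. unfold rscale. pose proof (Hr i). nra. Qed.

Lemma nonnegv_radd {n} (r s : RVec n) : nonnegv r -> nonnegv s -> nonnegv (radd r s).
Proof. intros Hr Hs i. unfold radd. pose proof (Hr i). pose proof (Hs i). lra. Qed.

Lemma vcv_nonneg {n} (rt : nat -> RVec n) lam : (forall t, nonnegv (rt t)) -> vcv rt lam -> nonnegv lam.
Proof.
  intros Hrt Hcv i.
  apply (Rle_cv_lim (Un := fun _ => 0) (Vn := fun t => rt t i)); [intros t; apply Hrt|apply Un_cv_const|apply Hcv].
Qed.

Lemma sumFin_scaled_dist n t (r s : RVec n) : 0 <= t ->
  sumFin n (fun i => Rabs (rscale t r i - rscale t s i) + 1)
  = t * sumFin n (fun i => Rabs (r i - s i)) + INR n.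
Proof.
  intros Ht. rewrite sumFin_plus, sumFin_const, <- sumFin_scal, Rmult_1_r. f_equal.
  apply sumFin_ext. intros i. unfold rscale.
  rewrite <- Rmult_minus_distr_l, Rabs_mult, (Rabs_pos_eq t Ht). reflexivity.
Qed.

Section Lipschitz.

Variables (n : nat) (f : NVec n -> R) (D0 : R).
Hypothesis f_nonneg : forall k, 0 <= f k.
Hypothesis f_sub : subadditive f.
Hypothesis f_D0 : forall k i, f k - f (nadd k (unitv i)) <= D0.

Definition lipD : R := maxFin n (fun i => f (unitv i)) D0.

(* One step along a coordinate changes f by at most D: upwards by subadditivity,
   downwards by the hypothesis on D0. *)
Lemma f_unit_step k i : Rabs (f (nadd k (unitv i)) - f k) <= lipD.
Proof.
  pose proof (f_sub k (unitv i)). pose proof (f_D0 k i).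
  pose proof (maxFin_ge_g n (fun i => f (unitv i)) D0 i).
  pose proof (maxFin_ge_d n (fun i => f (unitv i)) D0).
  unfold lipD. apply Rabs_le. lra.
Qed.

Lemma f_add_mass K : forall (a c : NVec n), sumFin n (fun i => INR (a i)) = INR K ->
  Rabs (f (nadd c a) - f c) <= lipD * INR K.
Proof.
  induction K as [|K IH]; intros a c Ha.
  - replace (nadd c a) with c.
    + rewrite Rminus_diag, Rabs_R0. simpl. lra.
    + apply functional_extensionality. intros i. unfold nadd.
      rewrite (sumFin_nat_zero n a Ha i). lia.
  - destruct (nvec_remove_unit n a K Ha) as [i [a' [Ea Ha']]].
    replace (nadd c a) with (nadd (nadd c a') (unitv i))
      by (apply functional_extensionality; intros j; unfold nadd; rewrite Ea; lia).
    pose proof (IH a' c Ha'). pose proof (f_unit_step (nadd c a') i).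
    replace (f (nadd (nadd c a') (unitv i)) - f c)
      with ((f (nadd (nadd c a') (unitv i)) - f (nadd c a')) + (f (nadd c a') - f c)) by ring.
    rewrite S_INR. eapply Rle_trans; [apply Rabs_triang|]. lra.
Qed.

(* Discrete Lipschitz bound: go from k down to min(k,m), then up to m. *)
Lemma f_lipschitz k m :
  Rabs (f k - f m) <= lipD * sumFin n (fun i => Rabs (INR (k i) - INR (m i))).
Proof.
  set (c := fun i => Nat.min (k i) (m i)).
  set (a := fun i => (k i - c i)%nat). set (b := fun i => (m i - c i)%nat).
  destruct (sumFin_nat n a) as [Ka HKa]. destruct (sumFin_nat n b) as [Kb HKb].
  pose proof (f_add_mass Ka a c HKa) as Ha. pose proof (f_add_mass Kb b c HKb) as Hb.
  replace (nadd c a) with k in Ha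
    by (apply functional_extensionality; intros i; unfold nadd, a, c; lia).
  replace (nadd c b) with m in Hb
    by (apply functional_extensionality; intros i; unfold nadd, b, c; lia).
  rewrite (sumFin_ext n _ (fun i => INR (a i) + INR (b i))), sumFin_plus, HKa, HKb.
  - replace (f k - f m) with ((f k - f c) - (f m - f c)) by ring.
    eapply Rle_trans; [apply Rabs_triang|]. rewrite Rabs_Ropp. lra.
  - intros i. unfold a, b, c. destruct (Nat.le_ge_cases (k i) (m i)) as [H|H].
    + rewrite Nat.min_l, Nat.sub_diag, minus_INR by exact H.
      apply le_INR in H. rewrite Rabs_left1 by lra. simpl. ring.
    + rewrite Nat.min_r, Nat.sub_diag, minus_INR by exact H.
      apply le_INR in H. rewrite Rabs_pos_eq by lra. simpl. ring.
Qed.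

Lemma lipD_sum_mono (g h : Fin.t n -> R) :
  (forall i, g i <= h i) -> lipD * sumFin n g <= lipD * sumFin n h.
Proof. apply maxFin_mul_sum_mono. intros i. apply f_nonneg. Qed.

Lemma lipD_dim_nonneg : 0 <= lipD * INR n.
Proof.
  pose proof (lipD_sum_mono (fun _ => 0) (fun _ => 1) (fun _ => Rle_0_1)) as H.
  rewrite !sumFin_const in H. lra.
Qed.

Lemma fext_lipschitz (X Y : RVec n) : nonnegv X -> nonnegv Y ->
  Rabs (fext f X - fext f Y) <= lipD * sumFin n (fun i => Rabs (X i - Y i) + 1).
Proof.
  intros HX HY. eapply Rle_trans; [apply f_lipschitz|].
  apply lipD_sum_mono. intros i.
  pose proof (ceilN_bounds (X i) (HX i)). pose proof (ceilN_bounds (Y i) (HY i)).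
  apply Rabs_le. pose proof (Rle_abs (X i - Y i)). pose proof (Rle_abs (- (X i - Y i))).
  rewrite Rabs_Ropp in *. lra.
Qed.

Lemma fext_subadditive (X Y : RVec n) : nonnegv X -> nonnegv Y ->
  fext f (radd X Y) <= fext f X + fext f Y + lipD * (2 * INR n).
Proof.
  intros HX HY. unfold fext.
  set (k := fun i => ceilN (X i)). set (m := fun i => ceilN (Y i)).
  pose proof (f_lipschitz (fun i => ceilN (radd X Y i)) (nadd k m)) as L.
  pose proof (f_sub k m).
  assert (lipD * sumFin n (fun i => Rabs (INR (ceilN (radd X Y i)) - INR (nadd k m i)))
          <= lipD * sumFin n (fun _ => 2)) as Hc.
  { apply lipD_sum_mono. intros i. unfold nadd, k, m, radd. rewrite plus_INR.
    pose proof (ceilN_bounds (X i) (HX i)). pose proof (ceilN_bounds (Y i) (HY i)).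
    pose proof (ceilN_bounds (X i + Y i) ltac:(pose proof (HX i); pose proof (HY i); lra)).
    apply Rabs_le. lra. }
  rewrite sumFin_const in Hc.
  pose proof (Rle_abs (f (fun i => ceilN (radd X Y i)) - f (nadd k m))). lra.
Qed.

End Lipschitz.

Definition limit_at_infty (g : R -> R) : R :=
  match excluded_middle_informative (exists L, lim_infty g L) with
  | left H => proj1_sig (constructive_indefinite_description _ H)
  | right _ => 0
  end.

Lemma limit_at_infty_spec g : (exists L, lim_infty g L) -> lim_infty g (limit_at_infty g).
Proof.
  intros H. unfold limit_at_infty.
  destruct (excluded_middle_informative _) as [H'|H']; [|contradiction].
  exact (proj2_sig (constructive_indefinite_description _ H')).
Qed.

Section Homogenization.

Variables (n : nat) (f : NVec n -> R) (D0 : R).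
Hypothesis f_nonneg : forall k, 0 <= f k.
Hypothesis f_sub : subadditive f.
Hypothesis f_D0 : forall k i, f k - f (nadd k (unitv i)) <= D0.

Definition fhat (r : RVec n) : R := limit_at_infty (fun t => fext f (rscale t r) / t).

(* The limit exists by Fekete's lemma applied to t |-> f(t r). *)
Lemma fhat_spec r : nonnegv r -> lim_infty (fun t => fext f (rscale t r) / t) (fhat r).
Proof.
  intros Hr. apply limit_at_infty_spec.
  apply (fekete_approx _ (lipD n f D0 * (2 * INR n))).
  - pose proof (lipD_dim_nonneg n f D0 f_nonneg). lra.
  - intros t _. apply f_nonneg.
  - intros s t Hs Ht. rewrite rscale_plus_l.
    apply fext_subadditive; auto; apply nonnegv_rscale; auto.
  - intros s Hs. exists (fext f (rscale 0 r) + lipD n f D0 * sumFin n (fun i => s * r i + 1)).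
    intros u Hu.
    pose proof (fext_lipschitz n f D0 f_nonneg f_sub f_D0 (rscale u r) (rscale 0 r)) as L.
    pose proof (lipD_sum_mono n f D0 f_nonneg (fun i => Rabs (rscale u r i - rscale 0 r i) + 1)
                  (fun i => s * r i + 1)) as M.
    assert (dist : forall i, Rabs (rscale u r i - rscale 0 r i) + 1 <= s * r i + 1).
    { intros i. unfold rscale. pose proof (Hr i).
      rewrite Rmult_0_l, Rminus_0_r, Rabs_pos_eq by nra. nra. }
    specialize (L ltac:(apply nonnegv_rscale; [lra|exact Hr]) ltac:(apply nonnegv_rscale; [lra|exact Hr])).
    specialize (M dist). pose proof (Rle_abs (fext f (rscale u r) - fext f (rscale 0 r))).
    lra.
Qed.

Lemma fhat_subadditive r s : nonnegv r -> nonnegv s -> fhat (radd r s) <= fhat r + fhat s.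
Proof.
  intros Hr Hs.
  rewrite <- (Rplus_0_r (fhat r + fhat s)).
  apply (lim_linear_bound (fun t => fext f (rscale t (radd r s)))
           (fun t => fext f (rscale t r) + fext f (rscale t s)) _ _ 0 (lipD n f D0 * (2 * INR n)) 0).
  - apply fhat_spec, nonnegv_radd; assumption.
  - apply (lim_ext (fun t => fext f (rscale t r) / t + fext f (rscale t s) / t));
      [intros t; unfold Rdiv; ring|].
    apply lim_plus; apply fhat_spec; assumption.
  - intros t Ht. rewrite rscale_radd, Rmult_0_l, Rplus_0_r.
    apply fext_subadditive; auto; apply nonnegv_rscale; assumption.
Qed.

(* Positive homogeneity, from the substitution t |-> a t in the limit. *)
Lemma fhat_homogeneous r a : nonnegv r -> 0 <= a -> fhat (rscale a r) = a * fhat r.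
Proof.
  intros Hr Ha.
  apply (lim_unique (fun t => fext f (rscale t (rscale a r)) / t));
    [apply fhat_spec, nonnegv_rscale; assumption|].
  destruct Ha as [Ha|<-].
  - apply (lim_ext (fun t => a * (fext f (rscale (a * t) r) / (a * t)))).
    + intros t. rewrite rscale_rscale, (Rmult_comm t a).
      destruct (Req_dec t 0) as [->|Ht].
      * unfold Rdiv. rewrite !Rmult_0_r, Rinv_0. ring.
      * field. lra.
    + apply lim_scale, (lim_comp_scale a (fun t => fext f (rscale t r) / t)); [exact Ha|].
      apply fhat_spec, Hr.
  - (* at a = 0 the numerator is the constant f(0) *)
    rewrite Rmult_0_l, <- (Rmult_0_r (f (fun _ => 0%nat))).
    apply (lim_ext (fun t => f (fun _ => 0%nat) * / t)); [|apply lim_scale, lim_inv].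
    intros t. unfold fext, Rdiv. f_equal. f_equal. apply functional_extensionality. intros i.
    unfold rscale. rewrite <- ceilN_0. f_equal. ring.
Qed.

Lemma fhat_convex r s a : nonnegv r -> nonnegv s -> 0 <= a <= 1 ->
  fhat (radd (rscale a r) (rscale (1 - a) s)) <= a * fhat r + (1 - a) * fhat s.
Proof.
  intros Hr Hs Ha.
  rewrite <- (fhat_homogeneous r a), <- (fhat_homogeneous s (1 - a)) by (assumption || lra).
  apply fhat_subadditive; apply nonnegv_rscale; (assumption || lra).
Qed.

Lemma fhat_lipschitz_le r s : nonnegv r -> nonnegv s ->
  fhat r <= fhat s + lipD n f D0 * sumFin n (fun i => Rabs (r i - s i)).
Proof.
  intros Hr Hs.
  apply (lim_linear_bound _ _ _ _ _ (lipD n f D0 * INR n) 0 (fhat_spec r Hr) (fhat_spec s Hs)).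
  intros t Ht.
  pose proof (fext_lipschitz n f D0 f_nonneg f_sub f_D0 (rscale t r) (rscale t s)
                (nonnegv_rscale t r Ht Hr) (nonnegv_rscale t s Ht Hs)) as L.
  rewrite sumFin_scaled_dist in L by exact Ht.
  pose proof (Rle_abs (fext f (rscale t r) - fext f (rscale t s))). lra.
Qed.

Lemma fhat_lipschitz r s : nonnegv r -> nonnegv s ->
  Rabs (fhat r - fhat s) <= lipD n f D0 * sumFin n (fun i => Rabs (r i - s i)).
Proof.
  intros Hr Hs. pose proof (fhat_lipschitz_le r s Hr Hs). pose proof (fhat_lipschitz_le s r Hs Hr).
  rewrite (sumFin_ext n _ (fun i => Rabs (r i - s i))) in * by (intros; apply Rabs_minus_sym).
  apply Rabs_le. lra.
Qed.

(* Along t r_t with r_t -> lam, the distance to t lam is o(t) by the Lipschitz bound. *)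
Lemma fhat_along_sequences (rt : nat -> RVec n) lam :
  (forall t, nonnegv (rt t)) -> vcv rt lam ->
  Un_cv (fun t => fext f (rscale (INR t) (rt t)) / INR t) (fhat lam).
Proof.
  intros Hrt Hcv. pose proof (vcv_nonneg rt lam Hrt Hcv) as Hlam.
  set (D := lipD n f D0).
  apply (Un_cv_close (fun t => fext f (rscale (INR t) lam) / INR t) _
           (fun t => D * sumFin n (fun i => Rabs (rt t i - lam i)) + D * INR n * / INR t) _ 1).
  - exact (lim_infty_seq _ _ (fhat_spec lam Hlam)).
  - rewrite <- (Rplus_0_r 0), <- (Rmult_0_r D) at 1. apply CV_plus.
    + apply CV_mult; [apply Un_cv_const|]. apply sumFin_cv0.
      intros i e He. destruct (Hcv i e He) as [N HN]. exists N. intros t Ht.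
      unfold R_dist in *. rewrite Rminus_0_r, Rabs_Rabsolu. auto.
    + rewrite <- (Rmult_0_r (D * INR n)).
      apply (lim_infty_seq (fun t => D * INR n * / t)), lim_scale, lim_inv.
  - intros t Ht. apply le_INR in Ht. simpl in Ht. set (x := INR t) in *.
    pose proof (fext_lipschitz n f D0 f_nonneg f_sub f_D0 (rscale x (rt t)) (rscale x lam)
                  (nonnegv_rscale x _ ltac:(lra) (Hrt t)) (nonnegv_rscale x _ ltac:(lra) Hlam)) as L.
    rewrite sumFin_scaled_dist in L by lra.
    replace (fext f (rscale x (rt t)) / x - fext f (rscale x lam) / x)
      with ((fext f (rscale x (rt t)) - fext f (rscale x lam)) * / x) by (field; lra).
    rewrite Rabs_mult, (Rabs_pos_eq (/ x)) by (left; apply Rinv_0_lt_compat; lra).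
    apply Rle_trans with (D * (x * sumFin n (fun i => Rabs (rt t i - lam i)) + INR n) * / x).
    + apply Rmult_le_compat_r; [left; apply Rinv_0_lt_compat; lra|exact L].
    + right. field. lra.
Qed.

End Homogenization.

Theorem mainTheorem11 (n : nat) (f : NVec n -> R) (D0 : R)
  (f_nonneg : forall k, 0 <= f k)
  (f_sub : subadditive f)
  (f_D0 : forall k i, f k - f (nadd k (unitv i)) <= D0) :
  exists fhat : RVec n -> R,
    (* fhat r = lim_{t -> oo} f(t r)/t on R_0^n *)
    (forall r, nonnegv r -> lim_infty (fun t => fext f (rscale t r) / t) (fhat r)) /\
    (* subadditive on R_0^n *)
    (forall r s, nonnegv r -> nonnegv s -> fhat (radd r s) <= fhat r + fhat s) /\
    (* convex on R_0^n *)
    (forall r s a, nonnegv r -> nonnegv s -> 0 <= a <= 1 ->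
        fhat (radd (rscale a r) (rscale (1 - a) s)) <= a * fhat r + (1 - a) * fhat s) /\
    (* Lipschitz with D = max {f(e_1),...,f(e_n), D0} *)
    (forall r s, nonnegv r -> nonnegv s ->
        Rabs (fhat r - fhat s)
          <= maxFin n (fun i => f (unitv i)) D0 * sumFin n (fun i => Rabs (r i - s i))) /\
    (* uniform convergence along sequences *)
    (forall (rt : nat -> RVec n) (lam : RVec n),
        (forall t, nonnegv (rt t)) -> vcv rt lam ->
        Un_cv (fun t => fext f (rscale (INR t) (rt t)) / INR t) (fhat lam)).
Proof.
  exists (fhat n f).
  split; [exact (fhat_spec n f D0 f_nonneg f_sub f_D0)|].
  split; [exact (fhat_subadditive n f D0 f_nonneg f_sub f_D0)|].
  split; [exact (fhat_convex n f D0 f_nonneg f_sub f_D0)|].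
  split; [exact (fhat_lipschitz n f D0 f_nonneg f_sub f_D0)|].
  exact (fhat_along_sequences n f D0 f_nonneg f_sub f_D0).
Qed.
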